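(* Let $d\in\mathbb{N}$ and $x,y\in\mathbb{R}^d$. Then $(x,y)\in\Pi$ if and only if $S_\ell(x,y)<\infty$ for every $\ell\in\mathbb{N}$.
   Context: For $z\in\mathbb{R}^d$, $\|z\|$ denotes the sup-norm distance from $z$ to $\mathbb{Z}^d$. Write $\mathbb{N}=\{1,2,\dots\}$. For $\psi:\mathbb{N}\to\mathbb{R}_{\ge 0}$, let $W(\psi)$ be the set of pairs $(x,y)\in\mathbb{R}^d\times\mathbb{R}^d$ for which $\|nx+y\|<\psi(n)$ holds for infinitely many $n\in\mathbb{N}$. $\mathcal{D}$ is the set of all non-increasing $\psi:\mathbb{N}\to\mathbb{R}_{\ge0}$ with $\sum_n\psi(n)^d=\infty$, and $\Pi=\bigcap_{\psi\in\mathcal{D}}W(\psi)$. For $\ell\in\mathbb{Z}$, $S_\ell(x,y)=\sum_{n\ge \ell}\min_{\ell\le m\le n}\|mx+y\|^d$, where the sum is over integers $n$ and the minimum over integers $m$. *)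

From HB Require Import structures.
From mathcomp Require Import all_boot all_order all_algebra.
From mathcomp Require Import all_classical all_reals all_analysis.
Set Implicit Arguments. Unset Strict Implicit. Unset Printing Implicit Defensive.
Import Order.TTheory GRing.Theory Num.Theory.
Local Open Scope ring_scope.

Definition distZ {R : realType} (t : R) : R :=
  Num.min (t - (Num.floor t)%:~R) ((Num.floor t + 1)%:~R - t).

Definition normZ {R : realType} {d : nat} (z : 'I_d -> R) : R :=
  \big[Num.max/0]_(i < d) distZ (z i).

Definition lin {R : realType} {d : nat} (n : nat) (x y : 'I_d -> R) : 'I_d -> R :=
  fun i => n%:R * x i + y i.

Definition W {R : realType} {d : nat} (psi : nat -> R) : set (('I_d -> R) * ('I_d -> R)) :=
  [set p | forall N : nat, exists n : nat, (N < n)%N /\ normZ (lin n p.1 p.2) < psi n].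

(* the class D (psi is only relevant on N = {1,2,...}) *)
Definition inD {R : realType} (d : nat) (psi : nat -> R) : Prop :=
  (forall n, (0 < n)%N -> 0 <= psi n) /\
  (forall m n, (0 < m)%N -> (m <= n)%N -> psi n <= psi m) /\
  (\sum_(1 <= n <oo) ((psi n ^+ d)%:E) = +oo)%E.

Definition Pi (R : realType) (d : nat) : set (('I_d -> R) * ('I_d -> R)) :=
  [set p | forall psi : nat -> R, inD d psi -> W psi p].

Definition S {R : realType} {d : nat} (l : nat) (x y : 'I_d -> R) : \bar R :=
  (\sum_(l <= n <oo)
     ((\big[Num.min/(normZ (lin l x y)) ^+ d]_(l <= m < n.+1) (normZ (lin m x y)) ^+ d)%:E))%E.
Arguments Pi R d : clear implicits.

From HB Require Import structures.
From mathcomp Require Import all_boot all_order all_algebra.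
From mathcomp Require Import all_classical all_reals all_analysis.
Import Order.TTheory GRing.Theory Num.Theory.
Local Open Scope ring_scope.

(* Let phi_l(n) = min_{l <= m <= n} ||m x + y||, so that S_l(x, y) is the sum of
   phi_l(n)^d over n >= l.  If S_l diverges then phi_l is itself in D, yet
   ||n x + y|| >= phi_l(n) for every n >= l, so (x, y) is not in W(phi_l).
   Conversely, if psi is in D and psi(n) <= ||n x + y|| for all n > N, then the
   monotonicity of psi gives psi(n) <= phi_{N+1}(n) for n > N, so S_{N+1} bounds
   the divergent tail of the sum of psi^d.  The argument never uses d > 0. *)

Lemma homo_in_bigmin {disp disp' : Order.disp_t} {T : orderType disp}
    {T' : orderType disp'} {A : {pred T}} {f : T -> T'} {I : Type} {r : seq I}
    {P : pred I} {F : I -> T} {x0 : T} :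
  {in A &, {homo f : a b / (a <= b)%O}} -> x0 \in A -> (forall i, P i -> F i \in A) ->
  f (\big[Order.min/x0]_(i <- r | P i) F i) = \big[Order.min/f x0]_(i <- r | P i) f (F i).
Proof.
move=> f_homo Ax0 AF; apply: (@big_morph_in _ _ A) => // a b Aa Ab; first by case: leP.
case: (leP a b) => [ab|/ltW ba]; first by rewrite !min_l ?f_homo.
by rewrite !min_r ?f_homo.
Qed.

Section RunningMin.
Context {disp : Order.disp_t} {T : orderType disp} (F : nat -> T).

(* For [n < l] the range is empty and the value is [F l], which keeps
   [running_min l] nonincreasing on the whole of [nat]. *)
Definition running_min (l n : nat) : T := \big[Order.min/F l]_(l <= m < n.+1) F m.

Lemma running_min_le l n : (l <= n)%N -> (running_min l n <= F n)%O.
Proof.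
by move=> ln; apply: (ge_bigmin_seq _ _ xpredT); rewrite // mem_index_iota ln ltnSn.
Qed.

Lemma le_running_min l m n : (m <= n)%N -> (running_min l n <= running_min l m)%O.
Proof. by move=> mn; apply: le_bigmin_nat; rewrite ?ltnS. Qed.

Lemma running_min_ge (c : T) l n : (c <= F l)%O ->
  (forall m, (l <= m <= n)%N -> (c <= F m)%O) -> (c <= running_min l n)%O.
Proof.
move=> cFl cF; rewrite /running_min big_seq_cond.
by apply: le_bigmin => // m; rewrite mem_index_iota ltnS andbT; apply: cF.
Qed.

End RunningMin.

Lemma running_min_homo_in {disp disp' : Order.disp_t} {T : orderType disp}
    {T' : orderType disp'} {A : {pred T}} {f : T -> T'} {F : nat -> T} {l n : nat} :
  {in A &, {homo f : a b / (a <= b)%O}} -> (forall m, F m \in A) ->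
  f (running_min F l n) = running_min (f \o F) l n.
Proof. by move=> f_homo AF; exact: (homo_in_bigmin (P := xpredT) f_homo (AF l)). Qed.

Lemma lee_nneseries_tail (R : realType) (u v : (\bar R)^nat) N :
  (forall n, (N <= n)%N -> (0 <= u n)%E) -> (forall n, (N <= n)%N -> (u n <= v n)%E) ->
  (\sum_(N <= n <oo) u n <= \sum_(N <= n <oo) v n)%E.
Proof.
move=> u0 uv; rewrite !(eseries_cond _ xpredT).
by apply: lee_nneseries => [n _ /andP[_ /u0]|n /andP[_ /uv]].
Qed.

Lemma nneseries_pinfty_shift {R : realType} {f : nat -> R} {k l : nat} :
  (k <= l)%N -> (forall n, (k <= n)%N -> 0 <= f n) ->
  (\sum_(k <= n <oo) (f n)%:E = +oo)%E <-> (\sum_(l <= n <oo) (f n)%:E = +oo)%E.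
Proof.
move=> kl f0; rewrite (@nneseries_split _ _ k (l - k)) ?subnKC => [|//|n /f0];
  last by rewrite lee_fin.
by rewrite sumEFin; case: (\sum_(l <= n <oo) _)%E.
Qed.

Section InhomogeneousOrbit.
Variables (R : realType) (d : nat).

Lemma normZ_ge0 (z : 'I_d -> R) : 0 <= normZ z.
Proof. exact: bigmax_ge_id. Qed.

Variables x y : 'I_d -> R.

Let dist_to_Z (n : nat) : R := normZ (lin n x y).

Lemma running_min_dist_ge0 l n : 0 <= running_min dist_to_Z l n.
Proof. by apply: running_min_ge => [|m _]; apply: normZ_ge0. Qed.

Lemma S_running_min l :
  S l x y = (\sum_(l <= n <oo) ((running_min dist_to_Z l n) ^+ d)%:E)%E.
Proof.
apply/congr_lim/funext => k; apply: eq_bigr => n _; congr (_%:E).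
by rewrite (running_min_homo_in (lerXn2r d)) // => m; rewrite nnegrE normZ_ge0.
Qed.

Lemma Pi_S_lt_pinfty : Pi R d (x, y) -> forall l, (0 < l)%N -> (S l x y < +oo)%E.
Proof.
move=> xyPi l l_gt0; rewrite ltey; apply/eqP => S_oo.
pose phi := running_min dist_to_Z l.
have phiD : inD d phi.
  split; first by move=> n _; apply: running_min_dist_ge0.
  split; first by move=> m n _; apply: le_running_min.
  rewrite (nneseries_pinfty_shift l_gt0) => [|n _];
    last exact/exprn_ge0/running_min_dist_ge0.
  by rewrite -S_oo S_running_min.
have [n [ln]] := xyPi phi phiD l.
by rewrite /= ltNge running_min_le // ltnW.
Qed.

Lemma S_lt_pinfty_Pi : (forall l, (0 < l)%N -> (S l x y < +oo)%E) -> Pi R d (x, y).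
Proof.
move=> S_fin psi [psi_ge0 [psi_noninc psi_oo]] N /=; apply: contrapT => xyNW.
have psi_le n : (N < n)%N -> psi n <= dist_to_Z n.
  by move=> Nn; rewrite leNgt; apply/negP => dist_lt; apply: xyNW; exists n.
have psi_le_min n : (N < n)%N -> psi n <= running_min dist_to_Z N.+1 n.
  move=> Nn; apply: running_min_ge => [|m /andP[Nm mn]].
    exact: le_trans (psi_noninc _ _ _ Nn) (psi_le _ _).
  exact: le_trans (psi_noninc _ _ (leq_trans _ Nm) mn) (psi_le _ Nm).
have tail_le : (\sum_(N.+1 <= n <oo) (psi n ^+ d)%:E <= S N.+1 x y)%E.
  rewrite S_running_min; apply: lee_nneseries_tail => n Nn; rewrite lee_fin.
    exact/exprn_ge0/psi_ge0/(leq_trans _ Nn).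
  rewrite lerXn2r ?nnegrE ?psi_le_min ?running_min_dist_ge0 //.
  exact/psi_ge0/(leq_trans _ Nn).
move: psi_oo; rewrite (nneseries_pinfty_shift (ltn0Sn N)) => [tail_oo|n /psi_ge0];
  last exact: exprn_ge0.
by have := S_fin N.+1 isT; rewrite ltNge -tail_oo tail_le.
Qed.

End InhomogeneousOrbit.

Theorem lemma4 (R : realType) (d : nat) (hd : (0 < d)%N) (x y : 'I_d -> R) :
  Pi R d (x, y) <-> (forall l : nat, (0 < l)%N -> (S l x y < +oo)%E).
Proof. by split; [apply: Pi_S_lt_pinfty|apply: S_lt_pinfty_Pi]. Qed.
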